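(* Let $\mathsf{P}>0$, $A_{\mathsf{u},k}>0$, $\sigma_k^2>0$, $\mathsf{g}_k>0$ for $k\in\{1,2\}$, $k_0,\eta>0$, and $\overline{\rho}\in(0,1]$. Set $\beta_k=\frac{A_{\mathsf{u},k}k_0^2\eta^2}{4\pi\sigma_k^2}$ and $\overline{\gamma}_{\mathsf{du},k}=\beta_k\mathsf{P}_k$. Consider the problem $$\max_{\mathsf{P}_1,\mathsf{P}_2\ge0,\ \mathsf{P}_1+\mathsf{P}_2\le\mathsf{P}}\ \log_2\big(1+\overline{\gamma}_{\mathsf{du},1}\mathsf{g}_1+\overline{\gamma}_{\mathsf{du},2}\mathsf{g}_2+\overline{\gamma}_{\mathsf{du},1}\overline{\gamma}_{\mathsf{du},2}\mathsf{g}_1\mathsf{g}_2\overline{\rho}\big).$$ Let $\xi=\dfrac{A_{\mathsf{u},1}\mathsf{g}_1/\sigma_1^2-A_{\mathsf{u},2}\mathsf{g}_2/\sigma_2^2}{A_{\mathsf{u},1}A_{\mathsf{u},2}k_0^2\eta^2\mathsf{g}_1\mathsf{g}_2\overline{\rho}/(4\pi\sigma_1^2\sigma_2^2)}$. Then an optimal power allocation is $$(\mathsf{P}_1^\star,\mathsf{P}_2^\star)=\begin{cases}(\mathsf{P},0)&\xi\ge\mathsf{P},\\(0,\mathsf{P})&\xi\le-\mathsf{P},\\\big(\tfrac{\mathsf{P}+\xi}{2},\tfrac{\mathsf{P}-\xi}{2}\big)&\text{otherwise}.\end{cases}$$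
   Context: In the paper this is the power allocation of the dual uplink channel of a two-user downlink channel served by a continuous-aperture array, where $\mathsf{g}_k$ are the users' channel gains and $\overline{\rho}=1-|\rho|^2$ with $\rho$ the channel correlation factor. *)

From Stdlib Require Import Reals.
Open Scope R_scope.

Definition log2 (x : R) : R := ln x / ln 2.

Definition beta (Au k0 eta sigma2 : R) : R :=
  Au * k0 ^ 2 * eta ^ 2 / (4 * PI * sigma2).

Definition rate (Au1 Au2 s1 s2 g1 g2 k0 eta rhobar P1 P2 : R) : R :=
  let gam1 := beta Au1 k0 eta s1 * P1 in
  let gam2 := beta Au2 k0 eta s2 * P2 in
  log2 (1 + gam1 * g1 + gam2 * g2 + gam1 * gam2 * g1 * g2 * rhobar).

Definition feasible (P P1 P2 : R) : Prop :=
  0 <= P1 /\ 0 <= P2 /\ P1 + P2 <= P.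

Definition xi (Au1 Au2 s1 s2 g1 g2 k0 eta rhobar : R) : R :=
  (Au1 * g1 / s1 - Au2 * g2 / s2) /
  (Au1 * Au2 * k0 ^ 2 * eta ^ 2 * g1 * g2 * rhobar / (4 * PI * s1 * s2)).

Definition Pstar (P x : R) : R * R :=
  if Rle_dec P x then (P, 0)
  else if Rle_dec x (- P) then (0, P)
  else ((P + x) / 2, (P - x) / 2).

(* Writing a = beta_1 g_1, c = beta_2 g_2 and d = beta_1 beta_2 g_1 g_2 rhobar,
   the argument of the logarithm is the bilinear form
   1 + a P_1 + c P_2 + d P_1 P_2, increasing in both powers, so the whole budget
   is spent.  On the segment P_2 = P - P_1 it equals 1 + c P + d P_1 (P + xi - P_1),
   because a - c = xi d; this concave parabola in P_1 peaks at (P + xi) / 2,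
   and clamping the peak to [0, P] gives the three cases of the allocation. *)

From Stdlib Require Import Reals Lra Psatz.
Open Scope R_scope.

Definition snr_gain (a c d P1 P2 : R) : R := 1 + a * P1 + c * P2 + d * P1 * P2.

Lemma log2_le_compat (u v : R) : 0 < u -> u <= v -> log2 u <= log2 v.
Proof.
  intros Hu Huv; unfold log2.
  apply Rmult_le_compat_r.
  - apply Rlt_le, Rinv_0_lt_compat; rewrite <- ln_1; apply ln_increasing; lra.
  - destruct Huv as [Hlt | ->]; [apply Rlt_le, ln_increasing |]; lra.
Qed.

Lemma snr_gain_pos (a c d P1 P2 : R) :
  0 <= a -> 0 <= c -> 0 <= d -> 0 <= P1 -> 0 <= P2 -> 0 < snr_gain a c d P1 P2.
Proof.
  intros Ha Hc Hd H1 H2; unfold snr_gain.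
  assert (0 <= a * P1) by (apply Rmult_le_pos; lra).
  assert (0 <= c * P2) by (apply Rmult_le_pos; lra).
  assert (0 <= d * P1 * P2) by (repeat apply Rmult_le_pos; lra).
  lra.
Qed.

Lemma snr_gain_le_full_budget (a c d P P1 P2 : R) :
  0 <= c -> 0 <= d -> feasible P P1 P2 ->
  snr_gain a c d P1 P2 <= snr_gain a c d P1 (P - P1).
Proof.
  intros Hc Hd (H1 & H2 & H12); unfold snr_gain.
  assert (0 <= (c + d * P1) * (P - P1 - P2)) by (apply Rmult_le_pos; nra).
  nra.
Qed.

Lemma snr_gain_full_budget (a c d x P t : R) :
  a - c = x * d ->
  snr_gain a c d t (P - t) = 1 + c * P + d * (t * (P + x - t)).
Proof.
  intros Hx; unfold snr_gain.
  replace a with (c + x * d) by lra; ring.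
Qed.

Lemma Pstar_snd (P x : R) : snd (Pstar P x) = P - fst (Pstar P x).
Proof.
  unfold Pstar.
  destruct (Rle_dec P x); [| destruct (Rle_dec x (- P))]; simpl; field.
Qed.

Lemma Pstar_feasible (P x : R) :
  0 < P -> feasible P (fst (Pstar P x)) (snd (Pstar P x)).
Proof.
  intros HP; unfold feasible, Pstar.
  destruct (Rle_dec P x); [| destruct (Rle_dec x (- P))]; simpl; lra.
Qed.

Lemma Pstar_fst_maximizes (P x t : R) :
  0 <= t <= P ->
  t * (P + x - t) <= fst (Pstar P x) * (P + x - fst (Pstar P x)).
Proof.
  intros Ht; unfold Pstar.
  destruct (Rle_dec P x); [| destruct (Rle_dec x (- P))]; simpl.
  - assert (0 <= (P - t) * (x - t)) by (apply Rmult_le_pos; lra); nra.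
  - assert (0 <= t * (t - P - x)) by (apply Rmult_le_pos; lra); nra.
  - pose proof (Rle_0_sqr (t - (P + x) / 2)); unfold Rsqr in *; nra.
Qed.

Lemma Pstar_maximizes_snr_gain (a c d x P P1 P2 : R) :
  0 <= c -> 0 <= d -> a - c = x * d -> feasible P P1 P2 ->
  snr_gain a c d P1 P2 <= snr_gain a c d (fst (Pstar P x)) (snd (Pstar P x)).
Proof.
  intros Hc Hd Hx Hf.
  apply Rle_trans with (1 := snr_gain_le_full_budget a c d P P1 P2 Hc Hd Hf).
  destruct Hf as (H1 & H2 & H12).
  set (Q := fst (Pstar P x)).
  rewrite Pstar_snd, !(snr_gain_full_budget a c d x P _ Hx).
  assert (Hpeak : P1 * (P + x - P1) <= Q * (P + x - Q))
    by (apply Pstar_fst_maximizes; lra).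
  apply Rplus_le_compat_l, Rmult_le_compat_l; lra.
Qed.

Lemma beta_pos (Au k0 eta sigma2 : R) :
  0 < Au -> 0 < k0 -> 0 < eta -> 0 < sigma2 -> 0 < beta Au k0 eta sigma2.
Proof.
  intros HA Hk He Hs; unfold beta.
  pose proof PI_RGT_0.
  apply Rdiv_lt_0_compat; [| nra].
  repeat apply Rmult_lt_0_compat; try apply pow_lt; lra.
Qed.

Lemma rate_snr_gain (Au1 Au2 s1 s2 g1 g2 k0 eta rhobar P1 P2 : R) :
  let b1 := beta Au1 k0 eta s1 in
  let b2 := beta Au2 k0 eta s2 in
  rate Au1 Au2 s1 s2 g1 g2 k0 eta rhobar P1 P2 =
  log2 (snr_gain (b1 * g1) (b2 * g2) (b1 * b2 * g1 * g2 * rhobar) P1 P2).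
Proof. unfold rate, snr_gain; simpl; f_equal; ring. Qed.

Lemma xi_balance (Au1 Au2 s1 s2 g1 g2 k0 eta rhobar : R) :
  0 < Au1 -> 0 < Au2 -> 0 < s1 -> 0 < s2 -> 0 < g1 -> 0 < g2 ->
  0 < k0 -> 0 < eta -> 0 < rhobar ->
  let b1 := beta Au1 k0 eta s1 in
  let b2 := beta Au2 k0 eta s2 in
  b1 * g1 - b2 * g2 =
  xi Au1 Au2 s1 s2 g1 g2 k0 eta rhobar * (b1 * b2 * g1 * g2 * rhobar).
Proof.
  intros HA1 HA2 Hs1 Hs2 Hg1 Hg2 Hk He Hr b1 b2.
  pose proof PI_RGT_0.
  unfold b1, b2, beta, xi; field.
  repeat split; try lra; apply Rgt_not_eq, pow_lt; lra.
Qed.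

(* s1, s2 denote the noise variances sigma_1^2, sigma_2^2. *)
Theorem lemma3 (P Au1 Au2 s1 s2 g1 g2 k0 eta rhobar : R) :
  0 < P -> 0 < Au1 -> 0 < Au2 -> 0 < s1 -> 0 < s2 -> 0 < g1 -> 0 < g2 ->
  0 < k0 -> 0 < eta -> 0 < rhobar -> rhobar <= 1 ->
  let x := xi Au1 Au2 s1 s2 g1 g2 k0 eta rhobar in
  let P1s := fst (Pstar P x) in
  let P2s := snd (Pstar P x) in
  feasible P P1s P2s /\
  forall P1 P2 : R, feasible P P1 P2 ->
    rate Au1 Au2 s1 s2 g1 g2 k0 eta rhobar P1 P2
    <= rate Au1 Au2 s1 s2 g1 g2 k0 eta rhobar P1s P2s.
Proof.
  intros HP HA1 HA2 Hs1 Hs2 Hg1 Hg2 Hk He Hr _ x P1s P2s.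
  split; [exact (Pstar_feasible P x HP) |].
  intros P1 P2 Hf.
  pose proof (xi_balance Au1 Au2 s1 s2 g1 g2 k0 eta rhobar
                HA1 HA2 Hs1 Hs2 Hg1 Hg2 Hk He Hr) as Hx.
  pose proof (beta_pos Au1 k0 eta s1 HA1 Hk He Hs1) as Hb1.
  pose proof (beta_pos Au2 k0 eta s2 HA2 Hk He Hs2) as Hb2.
  rewrite !rate_snr_gain; simpl in Hx |- *.
  set (b1 := beta Au1 k0 eta s1) in *; set (b2 := beta Au2 k0 eta s2) in *.
  clearbody b1 b2.
  assert (Ha : 0 < b1 * g1) by (apply Rmult_lt_0_compat; assumption).
  assert (Hc : 0 < b2 * g2) by (apply Rmult_lt_0_compat; assumption).
  assert (Hd : 0 < b1 * b2 * g1 * g2 * rhobar)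
    by (repeat apply Rmult_lt_0_compat; assumption).
  pose proof Hf as (H1 & H2 & _).
  apply log2_le_compat.
  - apply snr_gain_pos; lra.
  - apply Pstar_maximizes_snr_gain; [lra | lra | assumption | assumption].
Qed.
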